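(* Let $\Omega\subset\mathbb{R}^2$ be a bounded domain with area $S_\Omega$, and let $\lambda>0$, $\beta>0$, $\eta>0$. Let $$\mathcal{X}=\mathcal{W}^{1,\infty}_\eta=\{\mu\in W^{1,\infty}(\Omega)\ :\ \|\nabla\mu\|_{L^\infty}<\eta\},$$ equipped with the norm $\|\mu\|_{\mathcal{X}}^2=\int_\Omega\big(|\partial_1\mu|^2+|\partial_2\mu|^2+|\mu|^2\big)\,dx_1dx_2$. Define $\mathrm{R}:\mathcal{X}\to\mathbb{R}$ by $$\mathrm{R}(\mu)=\lambda\int_\Omega\Big(\big|p_1(\mu)\,\partial_1\mu\big|+\big|p_2(\mu)\,\partial_2\mu\big|\Big)\,dx_1dx_2,\qquad p_i(\mu)=\frac{1}{|\partial_i\mu|^2+\beta},\ i=1,2.$$ Then: (1) $\mathrm{R}$ is bounded from below on $\mathcal{X}$ (indeed $\mathrm{R}(\mu)\ge 0$ for all $\mu\in\mathcal{X}$); (2) for every $\delta>0$ there exists $M=M(\delta)>0$ such that $\mathrm{R}(\mu)\le M$ for all $\mu\in\mathcal{X}$ with $\|\mu\|_{\mathcal{X}}\le\delta$; (3) for every $\delta>0$ there exists $L=L(\delta)>0$ such that $|\mathrm{R}(\mu_1)-\mathrm{R}(\mu_2)|\le L\|\mu_1-\mu_2\|_{\mathcal{X}}$ for all $\mu_1,\mu_2\in\mathcal{X}$ with $\max\{\|\mu_1\|_{\mathcal{X}},\|\mu_2\|_{\mathcal{X}}\}\le\delta$.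
   Context: $\partial_1,\partial_2$ denote the first-order (weak) partial derivatives in the $x_1$ and $x_2$ directions and $\nabla=(\partial_1,\partial_2)$. The functional $\mathrm{R}$ is the nonlinear weighted anisotropic total variation with weights $p=(p_1(\mu),p_2(\mu))$ depending on $\mu$ itself. *)

From HB Require Import structures.
From mathcomp Require Import all_boot all_order all_algebra.
From mathcomp Require Import all_classical all_reals all_analysis.
Set Implicit Arguments. Unset Strict Implicit. Unset Printing Implicit Defensive.
Import Order.TTheory GRing.Theory Num.Theory.
Import numFieldNormedType.Exports.
Local Open Scope classical_set_scope.
Local Open Scope ring_scope.

Definition leb2 (R : realType) := ((@lebesgue_measure R) \x (@lebesgue_measure R))%E.
Arguments leb2 R : clear implicits.

(* Unit coordinate directions e_1 = (1,0), e_2 = (0,1); [true] codes x_1. *)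
Definition dir (R : realType) (b : bool) : R * R :=
  if b then (1, 0) else (0, 1).

Definition pder (R : realType) (b : bool) (phi : R * R -> R) : R * R -> R :=
  fun x => 'D_(dir R b) phi x.

Definition smooth2 (R : realType) (phi : R * R -> R) : Prop :=
  forall s : seq bool,
    let g := foldr (@pder R) phi s in
    continuous g /\ (forall (b : bool) (x : R * R), derivable g x (dir R b)).

Definition test_fun (R : realType) (Omega : set (R * R)) (phi : R * R -> R) : Prop :=
  smooth2 phi /\
  exists K : set (R * R), [/\ compact K, K `<=` Omega &
                            forall x, ~ K x -> phi x = 0].

Definition weak_pder (R : realType) (Omega : set (R * R)) (b : bool)
    (mu g : R * R -> R) : Prop :=
  forall phi, test_fun Omega phi ->
    (\int[leb2 R]_(x in Omega) (mu x * pder b phi x)%:E =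
     - \int[leb2 R]_(x in Omega) (g x * phi x)%:E)%E.

Definition Linfty (R : realType) (Omega : set (R * R)) (f : R * R -> R) : Prop :=
  measurable_fun Omega f /\
  exists c : R, {ae leb2 R, forall x, Omega x -> `|f x| <= c}.

(* mu in W^{1,infty}_eta(Omega), with g1, g2 its weak partial derivatives
   d_1 mu, d_2 mu; ||grad mu||_{L^infty} < eta, where |grad mu| is the
   Euclidean norm sqrt(g1^2+g2^2) and "ess sup < eta" is written out as
   "some c < eta bounds |grad mu| almost everywhere on Omega". *)
Definition in_X (R : realType) (Omega : set (R * R)) (eta : R)
    (mu g1 g2 : R * R -> R) : Prop :=
  [/\ Linfty Omega mu, Linfty Omega g1 /\ Linfty Omega g2,
      weak_pder Omega true mu g1, weak_pder Omega false mu g2 &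
      (exists2 c : R, c < eta &
        {ae leb2 R, forall x, Omega x -> Num.sqrt (g1 x ^+ 2 + g2 x ^+ 2) <= c})].

Definition normX (R : realType) (Omega : set (R * R))
    (mu g1 g2 : R * R -> R) : R :=
  Num.sqrt (fine (\int[leb2 R]_(x in Omega)
                    (`|g1 x| ^+ 2 + `|g2 x| ^+ 2 + `|mu x| ^+ 2)%:E)%E).

Definition pw (R : realType) (beta : R) (g : R * R -> R) : R * R -> R :=
  fun x => 1 / (`|g x| ^+ 2 + beta).

Definition Rfun (R : realType) (Omega : set (R * R)) (lambda beta : R)
    (g1 g2 : R * R -> R) : R :=
  lambda * fine (\int[leb2 R]_(x in Omega)
                   (`|pw beta g1 x * g1 x| + `|pw beta g2 x * g2 x|)%:E)%E.

(* With [phi t = |t| / (t^2 + beta)] we have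
   [R(mu) = lambda * int_Omega (phi (d_1 mu) + phi (d_2 mu))].  The weight [phi] is
   nonnegative, bounded by [1 + 1/beta] and [1/beta]-Lipschitz (its derivative is
   [(beta - t^2) / (t^2 + beta)^2]).  A bounded open set has finite area [S], so
   [0 <= R(mu) <= 2 lambda (1 + 1/beta) S], and
   [|R(mu1) - R(mu2)| <= lambda/beta * int (|d_1 (mu1 - mu2)| + |d_2 (mu1 - mu2)|)
                      <= lambda/beta * sqrt (2 S) * ||mu1 - mu2||_X]
   by Cauchy-Schwarz.  The constants depend neither on delta nor on eta. *)

From HB Require Import structures.
From mathcomp Require Import all_boot all_order all_algebra.
From mathcomp Require Import all_classical all_reals all_analysis.
From mathcomp Require Import lra ring.
Import Order.TTheory GRing.Theory Num.Theory.
Import numFieldNormedType.Exports.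
Local Open Scope classical_set_scope.
Local Open Scope ring_scope.

Section plane_measurability.
Context {R : realType}.

Lemma measurable_ball_plane (c : R * R) (r : R) : measurable (ball c r).
Proof.
have -> : ball c r = ball c.1 r `*` ball c.2 r by [].
by rewrite !ball_itv; apply: measurableX; exact: measurable_itv.
Qed.

Lemma exists_ratr_ball (x : R) (r : R) : 0 < r -> exists q : rat, ball x r (ratr q).
Proof.
move=> r0; have [q] := @rat_in_itvoo _ (x - r) (x + r) ltac:(lra).
by exists q; rewrite ball_itv.
Qed.

Definition rat_ball (q : rat * rat * rat) : set (R * R) :=
  ball ((ratr q.1.1, ratr q.1.2) : R * R) (ratr q.2).

(* Balls with rational centre and radius form a countable base of the plane. *)
Lemma open_measurable_plane {O : set (R * R)} : open O -> measurable O.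
Proof.
move=> oO.
have -> : O = \bigcup_q (if `[< rat_ball q `<=` O >] then rat_ball q else set0).
  apply/seteqP; split => [x Ox|x [q _]]; last by case: asboolP => // qO /qO.
  have /nbhs_ballP[e /= e0 xeO] : nbhs x O by exact: oO.
  have [r] := rat_in_itvoo (divr_gt0 e0 (ltr0n R 2)).
  rewrite in_itv /= => /andP[r0 re].
  have [a xa] := exists_ratr_ball x.1 _ r0.
  have [b xb] := exists_ratr_ball x.2 _ r0.
  have rO : rat_ball (a, b, r) `<=` O.
    move=> y ry; apply: xeO; rewrite (splitr e).
    apply: (@ball_triangle _ _ ((ratr a, ratr b) : R * R)).
      by apply: (le_ball (ltW re)); split.
    exact: (le_ball (ltW re) ry).
  by exists (a, b, r) => //; rewrite asboolT //; split; apply: ball_sym.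
apply: countable_bigcupT_measurable => [|q]; first exact: countableP.
by case: asboolP => _; [exact: measurable_ball_plane | exact: measurable0].
Qed.

Lemma leb2_ball_lty (c : R * R) (r : R) : (leb2 R (ball c r) < +oo)%E.
Proof.
have itv_lty (x : R) : (lebesgue_measure (ball x r) < +oo)%E.
  by rewrite ball_itv lebesgue_measure_itv /=; case: ifP => _; rewrite ?ltry.
have -> : ball c r = ball c.1 r `*` ball c.2 r by [].
have mball (x : R) : measurable (ball x r) by rewrite ball_itv; exact: measurable_itv.
rewrite /leb2 (@product_measure1E _ _ (measurableTypeR R) (measurableTypeR R) R
  lebesgue_measure lebesgue_measure _ _ (mball _) (mball _)).
by apply: lte_mul_pinfty; rewrite ?ge0_fin_numE ?measure_ge0 ?itv_lty.
Qed.

Lemma bounded_leb2_lty {O : set (R * R)} :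
  measurable O -> bounded_set O -> (leb2 R O < +oo)%E.
Proof.
move=> mO [M [_ OM]].
have Oball : O `<=` ball (0 : R * R) (`|M| + 2).
  move=> x Ox; rewrite -ball_normE /= sub0r normrN.
  apply: le_lt_trans (_ : `|M| + 1 < `|M| + 2); last by rewrite ltrD2l ltr1n.
  by apply: OM Ox; rewrite (le_lt_trans (ler_norm M)) // ltrDl.
apply: le_lt_trans (leb2_ball_lty 0 (`|M| + 2)).
by apply: (le_measure (leb2 R) _ _ Oball); rewrite inE //; exact: measurable_ball_plane.
Qed.
End plane_measurability.

Section Linfty_closure.
Context {R : realType} {O : set (R * R)}.
Implicit Types f g : R * R -> R.

(* [leb2 R] is not syntactically a measure, so the generic filter hint does not fire. *)
#[local] Instance ae_filter_leb2 : Filter (nbhs (almost_everywhere (leb2 R))) :=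
  ae_filter_ringOfSetsType (leb2 R).

Lemma Linfty_cst (k : R) : Linfty O (fun=> k).
Proof. by split; [exact: measurable_cst | exists `|k|; apply: aeW]. Qed.

Lemma Linfty_comp (h : R -> R) (c : R) f :
  continuous h -> (forall t, `|h t| <= c) -> measurable_fun O f -> Linfty O (h \o f).
Proof.
move=> hC hc mf; split; last by exists c; apply: aeW => x _; exact: hc.
exact: measurableT_comp (measurable_realfun.continuous_measurable_fun hC) mf.
Qed.

Lemma Linfty_norm {f} : Linfty O f -> Linfty O (fun x => `|f x|).
Proof.
move=> [mf [c fc]]; split; first exact: measurableT_comp mf.
by exists c; apply: filterS fc => x fxc /fxc; rewrite normr_id.
Qed.

Lemma LinftyD {f g} : Linfty O f -> Linfty O g -> Linfty O (f \+ g).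
Proof.
move=> [mf [c fc]] [mg [k gk]].
split; first exact: measurable_realfun.measurable_funD.
exists (c + k); apply: filterS2 fc gk => x fxc gxk Ox.
by rewrite (le_trans (ler_normD _ _)) // lerD // ?fxc ?gxk.
Qed.

Lemma LinftyM {f g} : Linfty O f -> Linfty O g -> Linfty O (f \* g).
Proof.
move=> [mf [c fc]] [mg [k gk]].
split; first exact: measurable_realfun.measurable_funM.
exists (c * k); apply: filterS2 fc gk => x fxc gxk Ox.
by rewrite normrM ler_pM ?fxc ?gxk.
Qed.

Lemma LinftyB {f g} : Linfty O f -> Linfty O g -> Linfty O (f \- g).
Proof.
move=> [mf [c fc]] [mg [k gk]].
split; first exact: measurable_realfun.measurable_funB.
exists (c + k); apply: filterS2 fc gk => x fxc gxk Ox.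
by rewrite (le_trans (ler_normB _ _)) // lerD // ?fxc ?gxk.
Qed.

Lemma integrable_Linfty {f} : measurable O ->
  (leb2 R O < +oo)%E -> Linfty O f -> (leb2 R).-integrable O (EFin \o f).
Proof.
move=> mO Ofin [mf [c fc]]; apply/integrableP.
split; first exact/measurable_realfun.measurable_EFinP.
apply: le_lt_trans (_ : (`|c|%:E * leb2 R O < +oo)%E); last by rewrite lte_mul_pinfty.
apply: integral_le_bound => //; first exact/measurable_realfun.measurable_EFinP.
by apply: filterS fc => x fxc /fxc; rewrite lee_fin => /le_trans; apply; exact: ler_norm.
Qed.

End Linfty_closure.

Definition wabs {R : realType} (beta t : R) : R := `|1 / (`|t| ^+ 2 + beta) * t|.

Section weighted_abs.
Context {R : realType} {beta : R}.
Hypothesis beta_gt0 : 0 < beta.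

Lemma continuous_wabs : continuous (wabs beta).
Proof.
move=> t; have t2b_neq0 : `|t| ^+ 2 + beta != 0 by rewrite gt_eqF // ltr_wpDl.
apply: cvg_norm; apply: cvgM; last exact: cvg_id.
apply: cvgM; first exact: cvg_cst.
apply: cvgV => //; apply: cvgD; last exact: cvg_cst.
by rewrite expr2; apply: cvgM; apply: cvg_norm; exact: cvg_id.
Qed.

Lemma wabs_le (t : R) : wabs beta t <= 1 + beta^-1.
Proof.
rewrite /wabs normrM mul1r normfV real_normK ?num_real //.
have t2b_gt0 : 0 < t ^+ 2 + beta by rewrite ltr_wpDl // sqr_ge0.
rewrite (gtr0_norm t2b_gt0) mulrC ler_pdivrMr // -real_normK ?num_real //.
have := sqr_ge0 (`|t| - 1); have := normr_ge0 t.
have binv_ge0 : 0 <= beta^-1 by rewrite invr_ge0 ltW.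
have := mulr_ge0 binv_ge0 (sqr_ge0 `|t|).
have := mulVf (lt0r_neq0 beta_gt0); nra.
Qed.

Lemma wabs_lipschitz (s t : R) : `|wabs beta s - wabs beta t| <= beta^-1 * `|s - t|.
Proof.
apply: le_trans (ler_dist_dist _ _) _; rewrite !real_normK ?num_real //.
have s2b_gt0 : 0 < s ^+ 2 + beta by rewrite ltr_wpDl // sqr_ge0.
have t2b_gt0 : 0 < t ^+ 2 + beta by rewrite ltr_wpDl // sqr_ge0.
have -> : 1 / (s ^+ 2 + beta) * s - 1 / (t ^+ 2 + beta) * t =
    (s - t) * (beta - s * t) / ((s ^+ 2 + beta) * (t ^+ 2 + beta)).
  by field; rewrite !gt_eqF.
have AB_gt0 := mulr_gt0 s2b_gt0 t2b_gt0.
rewrite normrM normfV (gtr0_norm AB_gt0) normrM -mulrA [_ * `|s - t|]mulrC.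
rewrite ler_wpM2l // ler_pdivrMr // -(ler_pM2l beta_gt0) mulrA mulfV ?lt0r_neq0 //.
rewrite mul1r -[X in X * _](gtr0_norm beta_gt0) -normrM.
have beta_sq_ge0 x : 0 <= beta * x ^+ 2 by rewrite mulr_ge0 ?sqr_ge0 ?ltW.
have := beta_sq_ge0 (s + t); have := beta_sq_ge0 (s - t).
have := beta_sq_ge0 s; have := beta_sq_ge0 t; have := sqr_ge0 (s * t).
by move=> *; apply/ler_normlP; split; nra.
Qed.

End weighted_abs.

Lemma ler_2mul_of_amgm (R : realFieldType) (A u v : R) : 0 <= u -> 0 <= v ->
  (forall t, 0 < t -> A <= t * u ^+ 2 + v ^+ 2 / t) -> A <= 2 * u * v.
Proof.
(* [t |-> 1/t] swaps the roles of [u] and [v]. *)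
wlog uv : u v / u <= v => [wlog_uv u_ge0 v_ge0 amgm|].
  have [|vu] := leP u v; first by move=> uv; exact: wlog_uv.
  rewrite mulrAC; apply: wlog_uv (ltW vu) v_ge0 u_ge0 _ => t t_gt0.
  have := amgm t^-1; rewrite invr_gt0 invrK => /(_ t_gt0).
  by rewrite [t^-1 * _]mulrC [v ^+ 2 * _]mulrC addrC.
move=> u_ge0 v_ge0 amgm; have [u_gt0|u0] := ltP 0 u; last first.
  have {u_ge0}u0 : u = 0 by apply/eqP; rewrite eq_le u0.
  subst u; rewrite mulr0 mul0r leNgt; apply/negP => A_gt0.
  pose w := A / ((v ^+ 2 + 1) * 2).
  have v2_gt0 : 0 < (v ^+ 2 + 1) * 2 by rewrite mulr_gt0 // ltr_wpDl ?sqr_ge0.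
  have w_gt0 : 0 < w by rewrite divr_gt0.
  have := amgm w^-1; rewrite invr_gt0 expr0n /= mulr0 add0r invrK => /(_ w_gt0).
  have -> : A = w * ((v ^+ 2 + 1) * 2) by rewrite /w mulfVK ?lt0r_neq0.
  by nra.
have v_gt0 := lt_le_trans u_gt0 uv.
have := amgm (v / u) (divr_gt0 v_gt0 u_gt0).
by congr (_ <= _); field; rewrite !lt0r_neq0.
Qed.

Section cauchy_schwarz_finite_measure.
Context {d} {T : measurableType d} {R : realType} {mu : {measure set T -> \bar R}}.
Context {D : set T}.
Hypotheses (mD : measurable D) (muD_lty : (mu D < +oo)%E).

Lemma integrable_cst_lty (k : R) : mu.-integrable D (EFin \o cst k).
Proof.
apply/integrableP; split; first exact/measurable_realfun.measurable_EFinP.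
by rewrite (eq_integral (cst `|k|%:E)) // integral_cst // lte_mul_pinfty.
Qed.

Lemma Rintegral_le_sqrt_mul (a q : T -> R) :
  mu.-integrable D (EFin \o a) -> mu.-integrable D (EFin \o q) ->
  (forall x, D x -> a x ^+ 2 <= q x) ->
  \int[mu]_(x in D) a x <= Num.sqrt (\int[mu]_(x in D) q x) * Num.sqrt (fine (mu D)).
Proof.
move=> ia iq aq.
(* AM-GM: [2 a <= t q + 1/t] for every [t > 0]; then optimize over [t]. *)
have Iq_ge0 : 0 <= \int[mu]_(x in D) q x.
  by apply: Rintegral_ge0 => x Dx; exact: le_trans (sqr_ge0 _) (aq x Dx).
have muD_ge0 : 0 <= fine (mu D) by rewrite fine_ge0 ?measure_ge0.
rewrite -(ler_pM2l (ltr0n R 2)) mulrA.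
apply: ler_2mul_of_amgm; rewrite ?sqrtr_ge0 // => t t_gt0.
rewrite !sqr_sqrtr // -RintegralZl //.
have iqt : mu.-integrable D (EFin \o (fun x => t * q x + t^-1)).
  exact: (integrableD mD (integrableZl mD t iq) (integrable_cst_lty t^-1)).
apply: le_trans (le_Rintegral mD _ iqt _) _.
- exact: (integrableZl mD 2 ia).
- move=> x Dx; have tinv_gt0 : 0 < t^-1 by rewrite invr_gt0.
  have := mulr_ge0 (ltW tinv_gt0) (sqr_ge0 (t * a x - 1)).
  have -> : t^-1 * (t * a x - 1) ^+ 2 = t * a x ^+ 2 - 2 * a x + t^-1.
    by field; rewrite lt0r_neq0.
  have := ler_wpM2l (ltW t_gt0) (aq x Dx); lra.
rewrite RintegralD ?RintegralZl ?Rintegral_cst // ?[t^-1 * _]mulrC //.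
- exact: (integrableZl mD t iq).
- exact: integrable_cst_lty.
Qed.

End cauchy_schwarz_finite_measure.

Section weighted_tv.
Context {R : realType} {Omega : set (R * R)} {lambda beta : R}.
Hypotheses (mOmega : measurable Omega)
  (Omega_lty : (leb2 R Omega < +oo)%E) (lambda_gt0 : 0 < lambda) (beta_gt0 : 0 < beta).

Local Notation area := (fine (leb2 R Omega)).

Lemma RfunE g1 g2 : Rfun Omega lambda beta g1 g2 =
  lambda * \int[leb2 R]_(x in Omega) (wabs beta (g1 x) + wabs beta (g2 x)).
Proof. by []. Qed.

Lemma Linfty_wabs {g} : Linfty Omega g -> Linfty Omega (wabs beta \o g).
Proof.
case=> mg _; apply: Linfty_comp mg; first exact: continuous_wabs.
by move=> t; rewrite normr_id; exact: wabs_le.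
Qed.

Lemma Rfun_ge0 g1 g2 : 0 <= Rfun Omega lambda beta g1 g2.
Proof.
rewrite RfunE; apply: mulr_ge0; first exact: ltW.
by apply: Rintegral_ge0 => x _; rewrite addr_ge0 ?normr_ge0.
Qed.

Lemma Rfun_le_area {g1 g2} : Linfty Omega g1 -> Linfty Omega g2 ->
  Rfun Omega lambda beta g1 g2 <= lambda * (2 * (1 + beta^-1)) * area.
Proof.
move=> Lg1 Lg2; rewrite RfunE -mulrA ler_pM2l // -Rintegral_cst //.
apply: le_Rintegral => //.
- exact/integrable_Linfty/LinftyD/Linfty_wabs/Lg2/Linfty_wabs.
- exact: integrable_cst_lty.
- by move=> x _; rewrite mulr2n mulrDl mul1r lerD ?wabs_le.
Qed.

Lemma Rfun_dist_le {g1 g2 h1 h2} :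
  Linfty Omega g1 -> Linfty Omega g2 -> Linfty Omega h1 -> Linfty Omega h2 ->
  `|Rfun Omega lambda beta g1 g2 - Rfun Omega lambda beta h1 h2| <=
  lambda * beta^-1 * \int[leb2 R]_(x in Omega) (`|g1 x - h1 x| + `|g2 x - h2 x|).
Proof.
move=> Lg1 Lg2 Lh1 Lh2.
have LFg := LinftyD (Linfty_wabs Lg1) (Linfty_wabs Lg2).
have LFh := LinftyD (Linfty_wabs Lh1) (Linfty_wabs Lh2).
have Ld := LinftyD (Linfty_norm (LinftyB Lg1 Lh1)) (Linfty_norm (LinftyB Lg2 Lh2)).
rewrite !RfunE -mulrBr normrM (gtr0_norm lambda_gt0) -mulrA ler_pM2l //.
rewrite -RintegralB ?integrable_Linfty //.
apply: le_trans (le_normr_Rintegral (mu := leb2 R) mOmega _) _.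
  exact: integrable_Linfty (LinftyB LFg LFh).
rewrite -RintegralZl ?integrable_Linfty //; apply: le_Rintegral => //.
- exact/integrable_Linfty/Linfty_norm/LinftyB.
- exact/integrable_Linfty/LinftyM/Ld/Linfty_cst.
- move=> x _; rewrite opprD addrACA mulrDr.
  apply: le_trans (ler_normD _ _) _.
  by rewrite lerD ?wabs_lipschitz.
Qed.

Lemma Rintegral_abs_add_le_normX {f1 f2 f3} :
  Linfty Omega f1 -> Linfty Omega f2 -> Linfty Omega f3 ->
  \int[leb2 R]_(x in Omega) (`|f1 x| + `|f2 x|) <=
  Num.sqrt 2 * Num.sqrt area * normX Omega f3 f1 f2.
Proof.
move=> L1 L2 L3.
pose q x := `|f1 x| ^+ 2 + `|f2 x| ^+ 2 + `|f3 x| ^+ 2.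
have Lq : Linfty Omega q.
  by apply: LinftyD; [apply: LinftyD|]; apply: LinftyM; apply: Linfty_norm.
have -> : normX Omega f3 f1 f2 = Num.sqrt (\int[leb2 R]_(x in Omega) q x) by [].
rewrite mulrAC -sqrtrM // -RintegralZl ?integrable_Linfty //.
apply: Rintegral_le_sqrt_mul => //.
- exact/integrable_Linfty/LinftyD/Linfty_norm/L2/Linfty_norm.
- exact/integrable_Linfty/LinftyM/Lq/Linfty_cst.
- move=> x _; rewrite /q; have := sqr_ge0 (`|f1 x| - `|f2 x|).
  have := sqr_ge0 `|f3 x|; lra.
Qed.

End weighted_tv.

Theorem lemma1 (R : realType) (Omega : set (R * R)) (lambda beta eta : R) :
  open Omega -> connected Omega -> bounded_set Omega -> Omega !=set0 ->
  0 < lambda -> 0 < beta -> 0 < eta ->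
  [/\ (* (1) R >= 0 on X, hence bounded below *)
      (forall mu g1 g2, in_X Omega eta mu g1 g2 ->
         0 <= Rfun Omega lambda beta g1 g2),
      (* (2) bounded on bounded sets of X *)
      (forall delta : R, 0 < delta -> exists2 M : R, 0 < M &
         forall mu g1 g2, in_X Omega eta mu g1 g2 ->
           normX Omega mu g1 g2 <= delta ->
           Rfun Omega lambda beta g1 g2 <= M) &
      (* (3) Lipschitz on bounded sets of X *)
      (forall delta : R, 0 < delta -> exists2 L : R, 0 < L &
         forall mu1 g1 g2 mu2 h1 h2,
           in_X Omega eta mu1 g1 g2 -> in_X Omega eta mu2 h1 h2 ->
           Num.max (normX Omega mu1 g1 g2) (normX Omega mu2 h1 h2) <= delta ->
           `|Rfun Omega lambda beta g1 g2 - Rfun Omega lambda beta h1 h2|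
             <= L * normX Omega (mu1 \- mu2) (g1 \- h1) (g2 \- h2))].
Proof.
move=> oOmega _ bOmega _ lambda_gt0 beta_gt0 _.
have mOmega := open_measurable_plane oOmega.
have Omega_lty := bounded_leb2_lty mOmega bOmega.
have area_ge0 : 0 <= fine (leb2 R Omega) by rewrite fine_ge0 ?measure_ge0.
have lambda_ge0 := ltW lambda_gt0.
have binv_ge0 : 0 <= beta^-1 by rewrite invr_ge0 ltW.
split.
- by move=> *; exact: Rfun_ge0.
- move=> delta _; set M := lambda * (2 * (1 + beta^-1)) * fine (leb2 R Omega).
  have M_ge0 : 0 <= M by rewrite !mulr_ge0 ?addr_ge0.
  exists (M + 1) => [|mu g1 g2 [_ [Lg1 Lg2] _ _ _] _].
    exact: ltr_wpDl M_ge0 ltr01.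
  apply: le_trans (Rfun_le_area mOmega Omega_lty lambda_gt0 beta_gt0 Lg1 Lg2) _.
  by rewrite lerDl.
- move=> delta _.
  set L := lambda * beta^-1 * (Num.sqrt 2 * Num.sqrt (fine (leb2 R Omega))).
  have L_ge0 : 0 <= L by rewrite !mulr_ge0 ?sqrtr_ge0.
  exists (L + 1) => [|mu1 g1 g2 mu2 h1 h2 [Lm1 [Lg1 Lg2] _ _ _] [Lm2 [Lh1 Lh2] _ _ _] _].
    exact: ltr_wpDl L_ge0 ltr01.
  apply: le_trans (Rfun_dist_le mOmega Omega_lty lambda_gt0 beta_gt0 Lg1 Lg2 Lh1 Lh2) _.
  rewrite mulrDl mul1r ler_wpDr ?sqrtr_ge0 // /L -!mulrA !ler_wpM2l // mulrA.
  exact: (Rintegral_abs_add_le_normX mOmega Omega_lty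
    (LinftyB Lg1 Lh1) (LinftyB Lg2 Lh2) (LinftyB Lm1 Lm2)).
Qed.
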